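(* Let $n \ge 1$ and let $L$ be an $n \times n$ Latin square with rows, columns and symbols indexed by $\{0,1,\dots,n-1\}$. Then $$\sum_{0 \le r_1 < r_2 \le n-1} d(r_1,r_2) = \frac{n^2(n^2-1)}{6},$$ where $d(r_1,r_2) = \sum_{s=0}^{n-1} \lvert \mathrm{pos}(r_1,s) - \mathrm{pos}(r_2,s) \rvert$.
   Context: An $n \times n$ Latin square is an $n\times n$ array with entries in $\{0,\dots,n-1\}$ in which each symbol occurs exactly once in each row and exactly once in each column. Rows and columns are indexed by $\{0,\dots,n-1\}$. For a row $r$ and a symbol $s$, $\mathrm{pos}(r,s) \in \{0,\dots,n-1\}$ denotes the column in which symbol $s$ appears in row $r$. The absolute value $\lvert \mathrm{pos}(r_1,s) - \mathrm{pos}(r_2,s)\rvert$ is taken as ordinary integers. *)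

From mathcomp Require Import all_boot all_order all_algebra.
Set Implicit Arguments. Unset Strict Implicit. Unset Printing Implicit Defensive.

Definition latin_square (n : nat) (L : 'I_n -> 'I_n -> 'I_n) : Prop :=
  (forall r, injective (L r)) /\ (forall c, injective (fun r => L r c)).

(* pos r s : the column in which symbol s appears in row r (0 if none,
   which never happens for a Latin square). *)
Definition pos (n : nat) (L : 'I_n -> 'I_n -> 'I_n) (r s : 'I_n) : nat :=
  match [pick c | L r c == s] with Some c => nat_of_ord c | None => 0%N end.

Definition dist_rows (n : nat) (L : 'I_n -> 'I_n -> 'I_n) (r1 r2 : 'I_n) : nat :=
  \sum_(s < n) absz (Posz (pos L r1 s) - Posz (pos L r2 s))%R.

(* For a fixed symbol s, a Latin square places s exactly once in each row and
   each column, so r |-> pos(r, s) is a permutation of the columns.  Hence the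
   contribution of s to the total distance is the sum of |i - j| over pairs of
   columns i < j, which is 'C(n + 1, 3) = (n + 1) n (n - 1) / 6, independently
   of s.  Summing over the n symbols gives n^2 (n^2 - 1) / 6. *)

From mathcomp Require Import all_boot all_order all_algebra zify.
Import GRing.Theory.

Set Implicit Arguments.
Unset Strict Implicit.
Unset Printing Implicit Defensive.

Lemma sum_distn_last n : \sum_(i < n) `|i - n| = 'C(n.+1, 2).
Proof.
rewrite -bin2_sum big_rev_mkord subn0 big_ord_recr /= subnn addn0.
by apply: eq_bigr => i _; rewrite distnEr ?subSS // ltnW.
Qed.

Lemma sum_distn_ord n : \sum_(i < n) \sum_(j < n) `|i - j| = 'C(n.+1, 3) * 2.
Proof.
elim: n => [|n IHn]; first by rewrite big_ord0.
rewrite big_ord_recr /= big_ord_recr /= distnn addn0.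
under eq_bigr do rewrite big_ord_recr /=.
rewrite big_split /= IHn sum_distn_last.
under eq_bigr do rewrite distnC.
by rewrite sum_distn_last (binS n.+1 2) mulnDl -addnA addnn -muln2.
Qed.

Lemma sum_ord_pairs_sym n (f : 'I_n -> 'I_n -> nat) :
    (forall i j, f i j = f j i) -> (forall i, f i i = 0) ->
  \sum_(i < n) \sum_(j < n) f i j = (\sum_(i < n) \sum_(j < n | i < j) f i j) * 2.
Proof.
move=> fC f0.
have split_row i : \sum_(j < n) f i j
    = \sum_(j < n | i < j) f i j + \sum_(j < n | j < i) f i j.
  rewrite (bigID (fun j : 'I_n => i < j)) /=; congr (_ + _).
  rewrite big_mkcond [RHS]big_mkcond; apply: eq_bigr => j _.
  by case: ltngtP => // /val_inj ->; rewrite f0.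
rewrite (eq_bigr _ (fun i _ => split_row i)) big_split /= muln2 -addnn.
congr (_ + _); rewrite (exchange_big_dep predT) //=.
by apply: eq_bigr => i _; apply: eq_bigr => j _; rewrite fC.
Qed.

Lemma sum_ord_pairs_distn_inj n (g : 'I_n -> 'I_n) : injective g ->
  \sum_(i < n) \sum_(j < n | i < j) `|g i - g j| = 'C(n.+1, 3).
Proof.
move=> g_inj; apply/eqP; rewrite -(eqn_pmul2r (isT : 0 < 2)) -sum_distn_ord.
apply/eqP; rewrite -sum_ord_pairs_sym; last 2 first.
- by move=> i j; rewrite distnC.
- by move=> i; rewrite distnn.
rewrite [RHS](reindex_inj g_inj); apply: eq_bigr => i _.
by rewrite [RHS](reindex_inj g_inj).
Qed.

Lemma pos_invF n (L : 'I_n -> 'I_n -> 'I_n) r (Lr_inj : injective (L r)) s :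
  pos L r s = invF Lr_inj s.
Proof.
rewrite /pos; case: pickP => [c /eqP <-|/(_ (invF Lr_inj s))].
  by rewrite invF_f.
by rewrite f_invF eqxx.
Qed.

Lemma latin_pos_perm n (L : 'I_n -> 'I_n -> 'I_n) s : latin_square L ->
  exists2 g : 'I_n -> 'I_n, injective g & forall r, pos L r s = g r.
Proof.
case=> row_inj col_inj; exists (fun r => invF (row_inj r) s) => [r1 r2 eq_col|r].
  by apply: (col_inj (invF (row_inj r1) s)); rewrite /= {2}eq_col !f_invF.
exact: pos_invF.
Qed.

Lemma sum_dist_rows_latin n (L : 'I_n -> 'I_n -> 'I_n) : latin_square L ->
  \sum_(r1 < n) \sum_(r2 < n | r1 < r2) dist_rows L r1 r2 = n * 'C(n.+1, 3).
Proof.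
move=> L_latin; rewrite /dist_rows.
under eq_bigr do rewrite exchange_big /=.
rewrite exchange_big /= -[n in n * _]card_ord -sum_nat_const.
apply: eq_bigr => s _; have [g g_inj posE] := latin_pos_perm s L_latin.
rewrite -(sum_ord_pairs_distn_inj g_inj).
by apply: eq_bigr => r1 _; apply: eq_bigr => r2 _; rewrite !posE.
Qed.

Lemma bin3_mul6 n : 'C(n.+1, 3) * 6 = n.+1 * n * n.-1.
Proof. by rewrite (bin_ffact n.+1 3) !ffactnS ffactn0 muln1 mulnA. Qed.

Theorem lemma1 (n : nat) (L : 'I_n -> 'I_n -> 'I_n) :
  (1 <= n)%N -> latin_square L ->
  ((\sum_(r1 < n) \sum_(r2 < n | (r1 < r2)%N) dist_rows L r1 r2)%:R : rat)
  = ((n ^ 2 * (n ^ 2 - 1))%:R / 6%:R)%R.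
Proof.
(* The identity also holds for n = 0. *)
move=> _ L_latin; rewrite sum_dist_rows_latin //.
have -> : n ^ 2 * (n ^ 2 - 1) = n * 'C(n.+1, 3) * 6.
  rewrite -mulnA bin3_mul6; case: n {L L_latin} => //= n; nia.
by rewrite [in RHS]natrM mulfK.
Qed.
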